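(* Let $\mathcal K$ be a finitely complete 2-category with a good yoneda structure. Let $A$ be an admissible object, $f:A\to C$ and $g:A\to B$ admissible 1-cells, $h:B\to C$ a 1-cell, $\phi:f\Rightarrow hg$ a 2-cell, and $\phi':B(g,1)\Rightarrow C(f,1)h$ the corresponding 2-cell (the unique one with $(C(f,1)\phi)\cdot\chi^f=(\phi'g)\cdot\chi^g$). Then: (1) $\phi$ exhibits $h$ as a left extension of $f$ along $g$ iff $\phi'$ exhibits $h$ as a left lifting of $B(g,1)$ along $C(f,1)$; (2) $\phi$ exhibits $h$ as a pointwise left extension of $f$ along $g$ iff $\phi'$ exhibits $h$ as an absolute left lifting of $B(g,1)$ along $C(f,1)$; (3) $\phi$ exhibits $g$ as an absolute left lifting of $f$ along $h$ iff $\phi'$ is an isomorphism.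
   Context: For $f:A\to B$, $g:C\to B$ the lax pullback $f/g$ has projections $p:f/g\to A$, $q:f/g\to C$ and universal 2-cell $\lambda:fp\Rightarrow gq$. Given $f:A\to C$, $g:A\to B$, $h:B\to C$, a 2-cell $\phi:f\Rightarrow hg$ exhibits $h$ as a left extension of $f$ along $g$ if for every $k:B\to C$, $\kappa\mapsto(\kappa g)\cdot\phi$ is a bijection from 2-cells $h\Rightarrow k$ to 2-cells $f\Rightarrow kg$; it exhibits $g$ as a left lifting of $f$ along (through) $h$ if for every $k:A\to B$, $\kappa\mapsto(h\kappa)\cdot\phi$ is a bijection from 2-cells $g\Rightarrow k$ to 2-cells $f\Rightarrow hk$; the lifting is absolute if $\phi j$ exhibits $gj$ as a left lifting of $fj$ along $h$ for all $j:D\to A$. $\phi$ exhibits $h$ as a pointwise left extension of $f$ along $g$ if for every $c:X\to B$, with lax pullback $p:g/c\to A$, $q:g/c\to X$, $\lambda:gp\Rightarrow cq$, the 2-cell $(h\lambda)\cdot(\phi p)$ exhibits $hc$ as a left extension of $fp$ along $q$. A good yoneda structure: a class of admissible 1-cells with $fg$ admissible whenever $f$ is; $A$ admissible when $1_A$ is; for admissible $A$ an object $\mathcal PA$ and admissible $y_A:A\to\mathcal PA$; for $f:A\to B$ with $A$, $f$ admissible a 1-cell $B(f,1):B\to\mathcal PA$ and a 2-cell $\chi^f:y_A\Rightarrow B(f,1)f$; such that (i) $\chi^f$ exhibits $f$ as an absolute left lifting of $y_A$ through $B(f,1)$; (ii) if $A$, $f:A\to B$ admissible and $\psi:y_A\Rightarrow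 kf$ exhibits $f$ as an absolute left lifting of $y_A$ along $k$, then $\psi$ exhibits $k$ as a pointwise left extension of $y_A$ along $f$. In this setting $\chi^g$ exhibits $B(g,1)$ as a left extension of $y_A$ along $g$, so $\phi\mapsto\phi'$ (defined by the equation in the claim) is a well-defined bijection between 2-cells $f\Rightarrow hg$ and 2-cells $B(g,1)\Rightarrow C(f,1)h$. *)

From mathcomp Require Import ssreflect ssrfun ssrbool.


Definition castc {T : Type} (c : T -> T -> Type) {f f' g g' : T}
  (e1 : f = f') (e2 : g = g') (a : c f g) : c f' g' :=
  match e1 in _ = x, e2 in _ = y return c x y with eq_refl, eq_refl => a end.
Arguments castc {T} c {f f' g g'} e1 e2 a.

(* Data of a strict 2-category; comp1 g f = "g f" (apply f first). *)
Record TwoCatData := {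
  ob : Type;
  hom : ob -> ob -> Type;
  cell : forall {A B : ob}, hom A B -> hom A B -> Type;
  id1 : forall A : ob, hom A A;
  comp1 : forall {A B C : ob}, hom B C -> hom A B -> hom A C;
  id2 : forall {A B : ob} (f : hom A B), cell f f;
  vcomp : forall {A B : ob} {f g k : hom A B}, cell g k -> cell f g -> cell f k;
  hcomp : forall {A B C : ob} {f f' : hom B C} {g g' : hom A B},
      cell f f' -> cell g g' -> cell (comp1 f g) (comp1 f' g');
  comp1A : forall {A B C D : ob} (h : hom C D) (g : hom B C) (f : hom A B),
      comp1 h (comp1 g f) = comp1 (comp1 h g) f;
  comp1_idl : forall {A B : ob} (f : hom A B), comp1 (id1 B) f = f;
  comp1_idr : forall {A B : ob} (f : hom A B), comp1 f (id1 A) = f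
}.

Arguments id1 {t} A.
Arguments cell {t A B} _ _.
Arguments comp1 {t A B C} _ _.
Arguments id2 {t A B} f.
Arguments vcomp {t A B f g k} _ _.
Arguments hcomp {t A B C f f' g g'} _ _.
Arguments comp1A {t A B C D} h g f.
Arguments comp1_idl {t A B} f.
Arguments comp1_idr {t A B} f.
Arguments hom t _ _ : clear implicits.

Section TwoCat.
Context {K : TwoCatData}.

Definition is_2cat : Prop :=
  (forall A B (f g k l : hom K A B) (c : cell k l) (b : cell g k) (a : cell f g),
      vcomp c (vcomp b a) = vcomp (vcomp c b) a) /\
  (forall A B (f g : hom K A B) (a : cell f g), vcomp (id2 g) a = a) /\
  (forall A B (f g : hom K A B) (a : cell f g), vcomp a (id2 f) = a) /\
  (forall A B C (f : hom K B C) (g : hom K A B), hcomp (id2 f) (id2 g) = id2 (comp1 f g)) /\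
  (forall A B C (f f' f'' : hom K B C) (g g' g'' : hom K A B)
      (a : cell f f') (a' : cell f' f'') (b : cell g g') (b' : cell g' g''),
      hcomp (vcomp a' a) (vcomp b' b) = vcomp (hcomp a' b') (hcomp a b)) /\
  (forall A B C D (h h' : hom K C D) (g g' : hom K B C) (f f' : hom K A B)
      (c : cell h h') (b : cell g g') (a : cell f f'),
      castc (@cell K A D) (comp1A h g f) (comp1A h' g' f') (hcomp c (hcomp b a))
      = hcomp (hcomp c b) a) /\
  (forall A B (f f' : hom K A B) (a : cell f f'),
      castc (@cell K A B) (comp1_idl f) (comp1_idl f') (hcomp (id2 (id1 B)) a) = a) /\
  (forall A B (f f' : hom K A B) (a : cell f f'),
      castc (@cell K A B) (comp1_idr f) (comp1_idr f') (hcomp a (id2 (id1 A))) = a).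

(* whiskering: wl h a = "h a", wr a g = "a g" *)
Definition wl {A B C} (h : hom K B C) {f f' : hom K A B} (a : cell f f')
  : cell (comp1 h f) (comp1 h f') := hcomp (id2 h) a.
Definition wr {A B C} {f f' : hom K B C} (a : cell f f') (g : hom K A B)
  : cell (comp1 f g) (comp1 f' g) := hcomp a (id2 g).

Definition is_iso {A B} {f g : hom K A B} (a : cell f g) : Prop :=
  exists b : cell g f, vcomp b a = id2 f /\ vcomp a b = id2 g.

Definition is_left_ext {A B C} (f : hom K A C) (g : hom K A B) (h : hom K B C)
  (phi : cell f (comp1 h g)) : Prop :=
  forall k : hom K B C, bijective (fun kappa : cell h k => vcomp (wr kappa g) phi).

Definition is_left_lifting {A B C} (f : hom K A C) (h : hom K B C) (g : hom K A B)
  (phi : cell f (comp1 h g)) : Prop :=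
  forall k : hom K A B, bijective (fun kappa : cell g k => vcomp (wl h kappa) phi).

Definition is_abs_left_lifting {A B C} (f : hom K A C) (h : hom K B C) (g : hom K A B)
  (phi : cell f (comp1 h g)) : Prop :=
  forall D (j : hom K D A),
    is_left_lifting (comp1 f j) h (comp1 g j)
      (castc (@cell K D C) erefl (esym (comp1A h g j)) (wr phi j)).

(* lax pullback (comma object) of f : A -> B and g : C -> B,
   with strict 2-dimensional universal property *)
Definition comma_at {A B C P X} (f : hom K A B) (g : hom K C B)
  (p : hom K P A) (q : hom K P C) (lam : cell (comp1 f p) (comp1 g q)) (m : hom K X P)
  : cell (comp1 f (comp1 p m)) (comp1 g (comp1 q m)) :=
  castc (@cell K X B) (esym (comp1A f p m)) (esym (comp1A g q m)) (wr lam m).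

Definition is_comma {A B C P} (f : hom K A B) (g : hom K C B)
  (p : hom K P A) (q : hom K P C) (lam : cell (comp1 f p) (comp1 g q)) : Prop :=
  (forall X (r : hom K X A) (s : hom K X C) (mu : cell (comp1 f r) (comp1 g s)),
     let factors (m : hom K X P) :=
       exists (e1 : comp1 p m = r) (e2 : comp1 q m = s),
         castc (@cell K X B) (f_equal (comp1 f) e1) (f_equal (comp1 g) e2)
           (comma_at f g p q lam m) = mu in
     exists m, factors m /\ forall m', factors m' -> m' = m) /\
  (forall X (m m' : hom K X P) (a : cell (comp1 p m) (comp1 p m'))
          (b : cell (comp1 q m) (comp1 q m')),
     vcomp (wl g b) (comma_at f g p q lam m) = vcomp (comma_at f g p q lam m') (wl f a) ->
     exists! d : cell m m', wl p d = a /\ wl q d = b).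

Definition pb_eq {A B C P X} (f : hom K A C) (g : hom K B C)
  (p : hom K P A) (q : hom K P B) (e : comp1 f p = comp1 g q) (m : hom K X P)
  : comp1 f (comp1 p m) = comp1 g (comp1 q m) :=
  eq_trans (comp1A f p m)
    (eq_trans (f_equal (fun t => comp1 t m) e) (esym (comp1A g q m))).

Definition is_pullback {A B C P} (f : hom K A C) (g : hom K B C)
  (p : hom K P A) (q : hom K P B) (e : comp1 f p = comp1 g q) : Prop :=
  (forall X (r : hom K X A) (s : hom K X B), comp1 f r = comp1 g s ->
     exists! m : hom K X P, comp1 p m = r /\ comp1 q m = s) /\
  (forall X (m m' : hom K X P) (a : cell (comp1 p m) (comp1 p m'))
          (b : cell (comp1 q m) (comp1 q m')),
     castc (@cell K X C) (pb_eq f g p q e m) (pb_eq f g p q e m') (wl f a) = wl g b ->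
     exists! d : cell m m', wl p d = a /\ wl q d = b).

Definition is_terminal (T : ob K) : Prop :=
  forall X, (exists! t : hom K X T, True) /\
            (forall (t t' : hom K X T) (a b : cell t t'), a = b).

(* finite completeness: terminal object, pullbacks and comma objects
   (equivalently: all finite 2-limits) *)
Definition finitely_complete : Prop :=
  (exists T, is_terminal T) /\
  (forall A B C (f : hom K A C) (g : hom K B C),
     exists P (p : hom K P A) (q : hom K P B) (e : comp1 f p = comp1 g q),
       is_pullback f g p q e) /\
  (forall A B C (f : hom K A B) (g : hom K C B),
     exists P (p : hom K P A) (q : hom K P C) (lam : cell (comp1 f p) (comp1 g q)),
       is_comma f g p q lam).

Definition is_pointwise_left_ext {A B C} (f : hom K A C) (g : hom K A B) (h : hom K B C)
  (phi : cell f (comp1 h g)) : Prop :=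
  forall X (c : hom K X B) P (p : hom K P A) (q : hom K P X)
         (lam : cell (comp1 g p) (comp1 c q)),
    is_comma g c p q lam ->
    is_left_ext (comp1 f p) q (comp1 h c)
      (castc (@cell K P C) erefl (comp1A h c q)
         (vcomp (wl h lam) (castc (@cell K P C) erefl (esym (comp1A h g p)) (wr phi p)))).

End TwoCat.
Arguments is_2cat K : clear implicits.
Arguments finitely_complete K : clear implicits.

(* Data of a yoneda structure on K.  Pre A = "P A"; yon A = y_A;
   Bf1 f hA hf = B(f,1), defined for admissible A and f; chi = chi^f. *)
Record YonedaData (K : TwoCatData) := {
  adm : forall {A B : ob K}, hom K A B -> Prop;
  Pre : ob K -> ob K;
  yon : forall A : ob K, hom K A (Pre A);
  Bf1 : forall {A B : ob K} (f : hom K A B), adm (id1 A) -> adm f -> hom K B (Pre A);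
  chi : forall {A B : ob K} (f : hom K A B) (hA : adm (id1 A)) (hf : adm f),
      cell (yon A) (comp1 (Bf1 f hA hf) f)
}.

Arguments adm {K} y {A B} _.
Arguments Pre {K} y _.
Arguments yon {K} y A.
Arguments Bf1 {K} y {A B} f _ _.
Arguments chi {K} y {A B} f hA hf.

Definition is_good_yoneda {K : TwoCatData} (Y : YonedaData K) : Prop :=
  (forall A B C (f : hom K B C) (g : hom K A B), adm Y f -> adm Y (comp1 f g)) /\
  (forall A, adm Y (id1 A) -> adm Y (yon Y A)) /\
  (forall A B (f : hom K A B) (hA : adm Y (id1 A)) (hf : adm Y f),
     is_abs_left_lifting (yon Y A) (Bf1 Y f hA hf) f (chi Y f hA hf)) /\
  (forall A B (f : hom K A B), adm Y (id1 A) -> adm Y f ->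
     forall (k : hom K B (Pre Y A)) (psi : cell (yon Y A) (comp1 k f)),
       is_abs_left_lifting (yon Y A) k f psi ->
       is_pointwise_left_ext (yon Y A) f k psi).

From mathcomp Require Import ssreflect ssrfun ssrbool.
From Stdlib Require Import ProofIrrelevance.

(* Each claim compares two maps between hom-sets of 2-cells.  Pasting with chi^f
   (an absolute left lifting) and with chi^g (a pointwise left extension, by axiom
   (ii)) identifies both hom-sets with 2-cells out of y_A, and the equation defining
   phi' says that the two pasted maps agree; so one map is bijective iff the other
   is.  For (2) this is done at every comma square g/c, for (1) without whiskering.
   For (3), pasting with chi^f shows that phi is an absolute left lifting iff
   (phi' g).chi^g is one.  By axiom (ii) that cell is then a left extension, as is
   chi^g, and the comparison phi' between two left extensions is invertible;
   conversely, post-composing the absolute lifting chi^g with an invertible phi'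
   gives an absolute lifting. *)

Lemma bij_id {X : Type} : bijective (@id X).
Proof. by exists id. Qed.

Lemma bij_square {X X' Y Y' Z : Type} (M : X -> Y) (N : X' -> Y') (T : X -> X')
  (L : Y -> Z) (E : Y' -> Z) :
  bijective T -> bijective L -> bijective E ->
  (forall x, L (M x) = E (N (T x))) -> bijective M <-> bijective N.
Proof.
move=> bT bL bE LM_EN; case: (bT) => Ti TK KT; case: (bL) => Li LK _; case: (bE) => Ei EK _.
split=> bM.
- have EN : Ei \o L \o M \o Ti =1 N by move=> x /=; rewrite LM_EN KT EK.
  apply: (eq_bij _ EN); apply: bij_comp; last exact: (bij_can_bij bT TK).
  by apply: bij_comp => //; apply: bij_comp => //; exact: (bij_can_bij bE EK).
- have LM : Li \o E \o N \o T =1 M by move=> x /=; rewrite -LM_EN LK.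
  apply: (eq_bij _ LM); apply: bij_comp => //.
  by apply: bij_comp => //; apply: bij_comp => //; exact: (bij_can_bij bL LK).
Qed.

Lemma inj_comp_bij {X Y Z : Type} {G : Y -> Z} {M : X -> Y} :
  injective G -> bijective (G \o M) -> bijective M.
Proof.
move=> injG [S GMK KGM]; exists (S \o G) => [x | y] /=; first exact: GMK.
by apply: injG; rewrite [G _]KGM.
Qed.

(* Cells whose boundaries agree only up to the equations [comp1A], [comp1_idl],
   [comp1_idr] are compared through [cell_heq]; turning it back into [=] needs
   uniqueness of identity proofs between 1-cells, taken from proof irrelevance. *)
Definition cell_heq {K : TwoCatData} {A B : ob K} {f g f' g' : hom K A B}
  (a : cell f g) (b : cell f' g') : Prop :=
  exists (e1 : f = f') (e2 : g = g'), castc (@cell K A B) e1 e2 a = b.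

Local Infix "~=" := cell_heq (at level 70).

Section CellHeq.
Context {K : TwoCatData}.
Implicit Types (A B C : ob K).

Lemma heq_refl {A B} {f g : hom K A B} (a : cell f g) : a ~= a.
Proof. by exists erefl, erefl. Qed.

Lemma heq_sym {A B} {f g f' g' : hom K A B} {a : cell f g} {b : cell f' g'} :
  a ~= b -> b ~= a.
Proof. by case=> e1 [e2 {b}<-]; case: f' / e1; case: g' / e2; apply: heq_refl. Qed.

Lemma heq_trans {A B} {f g f' g' f'' g'' : hom K A B}
  {a : cell f g} {b : cell f' g'} {c : cell f'' g''} : a ~= b -> b ~= c -> a ~= c.
Proof. by case=> e1 [e2 {b}<-]; case: f' / e1; case: g' / e2. Qed.

Lemma heq_eq {A B} {f g : hom K A B} (a b : cell f g) : a ~= b -> a = b.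
Proof.
case=> e1 [e2]; by rewrite (proof_irrelevance _ e1 erefl) (proof_irrelevance _ e2 erefl).
Qed.

Lemma castc_heq {A B} {f g f' g' : hom K A B} (e1 : f = f') (e2 : g = g') (a : cell f g) :
  castc (@cell K A B) e1 e2 a ~= a.
Proof. by case: f' / e1; case: g' / e2; apply: heq_refl. Qed.

Lemma castc_bij {A B} {f g f' g' : hom K A B} (e1 : f = f') (e2 : g = g') :
  bijective (castc (@cell K A B) e1 e2).
Proof.
by exists (castc (@cell K A B) (esym e1) (esym e2)); case: f' / e1; case: g' / e2.
Qed.

Lemma vcomp_heq {A B} {f g k f' g' k' : hom K A B}
  {a : cell f g} {b : cell g k} {a' : cell f' g'} {b' : cell g' k'} :
  a ~= a' -> b ~= b' -> vcomp b a ~= vcomp b' a'.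
Proof.
case=> e1 [e2 {a'}<-] [e3 [e4 {b'}<-]].
rewrite (proof_irrelevance _ e3 e2) {e3}.
by case: k' / e4; case: g' / e2; case: f' / e1; apply: heq_refl.
Qed.

Lemma hcomp_heq {A B C} {f f' f1 f1' : hom K B C} {g g' g1 g1' : hom K A B}
  {a : cell f f'} {b : cell g g'} {a1 : cell f1 f1'} {b1 : cell g1 g1'} :
  a ~= a1 -> b ~= b1 -> hcomp a b ~= hcomp a1 b1.
Proof.
case=> e1 [e2 {a1}<-] [e3 [e4 {b1}<-]].
by case: f1 / e1; case: f1' / e2; case: g1 / e3; case: g1' / e4; apply: heq_refl.
Qed.

Lemma wl_heq {A B C} (h : hom K B C) {f f' f1 f1' : hom K A B}
  {a : cell f f'} {a1 : cell f1 f1'} : a ~= a1 -> wl h a ~= wl h a1.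
Proof. by move=> e; apply: hcomp_heq (heq_refl _) e. Qed.

Lemma wr_heq {A B C} {f f' f1 f1' : hom K B C} {a : cell f f'} {a1 : cell f1 f1'}
  (g : hom K A B) : a ~= a1 -> wr a g ~= wr a1 g.
Proof. by move=> e; apply: hcomp_heq e (heq_refl _). Qed.

End CellHeq.

Section StrictTwoCategory.
Context {K : TwoCatData} (HK : is_2cat K).
Implicit Types (A B C D : ob K).

Lemma vcompA {A B} {f g k l : hom K A B} (c : cell k l) (b : cell g k) (a : cell f g) :
  vcomp c (vcomp b a) = vcomp (vcomp c b) a.
Proof. by case: HK => H _; apply: H. Qed.

Lemma vcomp_id2l {A B} {f g : hom K A B} (a : cell f g) : vcomp (id2 g) a = a.
Proof. by case: HK => _ [H _]; apply: H. Qed.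

Lemma vcomp_id2r {A B} {f g : hom K A B} (a : cell f g) : vcomp a (id2 f) = a.
Proof. by case: HK => _ [_ [H _]]; apply: H. Qed.

Lemma hcomp_id2 {A B C} (f : hom K B C) (g : hom K A B) :
  hcomp (id2 f) (id2 g) = id2 (comp1 f g).
Proof. by case: HK => _ [_ [_ [H _]]]; apply: H. Qed.

Lemma hcomp_vcomp {A B C} {f f' f'' : hom K B C} {g g' g'' : hom K A B}
  (a : cell f f') (a' : cell f' f'') (b : cell g g') (b' : cell g' g'') :
  hcomp (vcomp a' a) (vcomp b' b) = vcomp (hcomp a' b') (hcomp a b).
Proof. by case: HK => _ [_ [_ [_ [H _]]]]; apply: H. Qed.

Lemma hcompA {A B C D} {h h' : hom K C D} {g g' : hom K B C} {f f' : hom K A B}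
  (c : cell h h') (b : cell g g') (a : cell f f') :
  hcomp c (hcomp b a) ~= hcomp (hcomp c b) a.
Proof. by case: HK => _ [_ [_ [_ [_ [H _]]]]]; exists (comp1A h g f), (comp1A h' g' f'). Qed.

Lemma hcomp_id1r {A B} {f f' : hom K A B} (a : cell f f') : hcomp a (id2 (id1 A)) ~= a.
Proof. by case: HK => _ [_ [_ [_ [_ [_ [_ H]]]]]]; exists (comp1_idr f), (comp1_idr f'). Qed.

Lemma wl_vcomp {A B C} (h : hom K B C) {f g k : hom K A B} (b : cell g k) (a : cell f g) :
  wl h (vcomp b a) = vcomp (wl h b) (wl h a).
Proof. by rewrite /wl -hcomp_vcomp vcomp_id2l. Qed.

Lemma wr_vcomp {A B C} {f g k : hom K B C} (b : cell g k) (a : cell f g) (j : hom K A B) :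
  wr (vcomp b a) j = vcomp (wr b j) (wr a j).
Proof. by rewrite /wr -hcomp_vcomp vcomp_id2l. Qed.

Lemma wl_id2 {A B C} (h : hom K B C) (f : hom K A B) : wl h (id2 f) = id2 (comp1 h f).
Proof. exact: hcomp_id2. Qed.

Lemma wr_id2 {A B C} (h : hom K B C) (f : hom K A B) : wr (id2 h) f = id2 (comp1 h f).
Proof. exact: hcomp_id2. Qed.

Lemma whisker_exchange {A B C} {k k' : hom K B C} {g g' : hom K A B}
  (a : cell k k') (b : cell g g') :
  vcomp (wl k' b) (wr a g) = vcomp (wr a g') (wl k b).
Proof. by rewrite /wl /wr -!hcomp_vcomp !vcomp_id2l !vcomp_id2r. Qed.

Lemma wl_comp {A B C D} (h : hom K C D) (k : hom K B C) {f f' : hom K A B} (a : cell f f') :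
  wl h (wl k a) ~= wl (comp1 h k) a.
Proof. by apply: heq_trans (hcompA _ _ _) _; rewrite hcomp_id2; apply: heq_refl. Qed.

Lemma wr_comp {A B C D} {h h' : hom K C D} (a : cell h h') (g : hom K B C) (j : hom K A B) :
  wr (wr a g) j ~= wr a (comp1 g j).
Proof. by apply: heq_trans (heq_sym (hcompA _ _ _)) _; rewrite hcomp_id2; apply: heq_refl. Qed.

Lemma wl_wr {A B C D} (h : hom K C D) {g g' : hom K B C} (a : cell g g') (j : hom K A B) :
  wl h (wr a j) ~= wr (wl h a) j.
Proof. exact: hcompA. Qed.

Lemma wr_id1 {A B} {f f' : hom K A B} (a : cell f f') : wr a (id1 A) ~= a.
Proof. exact: hcomp_id1r. Qed.

End StrictTwoCategory.

Definition wrA {K : TwoCatData} {A B C D : ob K} {f : hom K B D} {h : hom K C D}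
  {g : hom K B C} (phi : cell f (comp1 h g)) (p : hom K A B)
  : cell (comp1 f p) (comp1 h (comp1 g p)) :=
  castc (@cell K A D) erefl (esym (comp1A h g p)) (wr phi p).

Section LiftingsAndExtensions.
Context {K : TwoCatData} (HK : is_2cat K).
Implicit Types (A B C D P X : ob K).

Lemma wrA_heq {A B C D} {f : hom K B D} {h : hom K C D} {g : hom K B C}
  (phi : cell f (comp1 h g)) (p : hom K A B) : wrA phi p ~= wr phi p.
Proof. exact: castc_heq. Qed.

Lemma bij_square_heq {X X' Y Y' : Type} {A B} {a b a' b' : hom K A B}
  (M : X -> Y) (N : X' -> Y') (T : X -> X') (L : Y -> cell a b) (E : Y' -> cell a' b') :
  a = a' -> b = b' -> bijective T -> bijective L -> bijective E ->
  (forall x, L (M x) ~= E (N (T x))) -> bijective M <-> bijective N.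
Proof.
move=> ea eb; case: a' / ea E; case: b' / eb => E bT bL bE LM_EN.
by apply: bij_square bT bL bE _ => x; apply: heq_eq.
Qed.

Lemma abs_left_lifting_left_lifting {A B C} {f : hom K A C} {h : hom K B C} {g : hom K A B}
  {phi : cell f (comp1 h g)} : is_abs_left_lifting f h g phi -> is_left_lifting f h g phi.
Proof.
move=> Habs k.
have e_k := esym (comp1_idr k).
apply: (bij_square_heq _ _ (castc (@cell K A B) (esym (comp1_idr g)) e_k) id id
  (esym (comp1_idr f)) (f_equal (comp1 h) e_k) (castc_bij _ _) bij_id bij_id _).2
  (Habs A (id1 A) (comp1 k (id1 A))).
move=> kappa; apply: vcomp_heq.
- exact: heq_sym (heq_trans (wrA_heq _ _) (wr_id1 HK _)).
- exact: (wl_heq h (heq_sym (castc_heq _ _ _))).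
Qed.

Lemma comma_id_section {A B P} {g : hom K A B} {p : hom K P A} {q : hom K P B}
  {lam : cell (comp1 g p) (comp1 (id1 B) q)} :
  is_comma g (id1 B) p q lam ->
  exists m : hom K A P, [/\ comp1 p m = id1 A, comp1 q m = g & wr lam m ~= id2 g].
Proof.
case=> univ _.
have [m [[pm [qm lam_m]] _]] := univ A (id1 A) g
  (castc (@cell K A B) (esym (comp1_idr g)) (esym (comp1_idl g)) (id2 g)).
exists m; split=> //.
have lam_m' : comma_at g (id1 B) p q lam m ~= id2 g.
  apply: heq_trans (heq_sym (castc_heq (f_equal (comp1 g) pm) (f_equal _ qm) _)) _.
  by rewrite lam_m; apply: castc_heq.
exact: heq_trans (heq_sym (castc_heq _ _ _)) lam_m'.
Qed.

Lemma left_ext_of_pointwise_at_id {A B C P} (f : hom K A C) (g : hom K A B) (h : hom K B C)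
  (phi : cell f (comp1 h g)) (p : hom K P A) (q : hom K P B)
  (lam : cell (comp1 g p) (comp1 (id1 B) q)) :
  is_comma g (id1 B) p q lam -> is_pointwise_left_ext f g h phi -> is_left_ext f g h phi.
Proof.
move=> Hc Hpw k.
have [m [pm qm lam_m]] := comma_id_section Hc.
(* Whiskering with the section m of the comma object undoes G. *)
pose G (alpha : cell f (comp1 k g)) : cell (comp1 f p) (comp1 k q) :=
  vcomp (castc (@cell K P C) erefl (f_equal (comp1 k) (comp1_idl q)) (wl k lam)) (wrA alpha p).
have G_inj : injective G.
  have GK alpha : wr (G alpha) m ~= alpha.
    rewrite -[alpha in _ ~= alpha](vcomp_id2l HK) wr_vcomp //; apply: vcomp_heq.
    + apply: heq_trans (wr_heq m (wrA_heq _ _)) _.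
      by apply: heq_trans (wr_comp HK _ _ _) _; rewrite pm; apply: wr_id1.
    + apply: heq_trans (wr_heq m (castc_heq _ _ _)) _.
      apply: heq_trans (heq_sym (wl_wr HK _ _ _)) _.
      by apply: heq_trans (wl_heq k lam_m) _; rewrite wl_id2 //; apply: heq_refl.
  move=> a1 a2 G12; apply: heq_eq.
  by apply: heq_trans (heq_sym (GK a1)) _; rewrite G12; apply: GK.
pose T := castc (@cell K B C) (esym (comp1_idr h)) (erefl k).
have GM kappa : G (vcomp (wr kappa g) phi) = vcomp (wr (T kappa) q)
    (castc (@cell K P C) erefl (comp1A h (id1 B) q) (vcomp (wl h lam) (wrA phi p))).
  apply: heq_eq.
  apply: (heq_trans (b := vcomp (vcomp (wr kappa (comp1 (id1 B) q)) (wl h lam)) (wrA phi p))).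
  - rewrite -whisker_exchange // -vcompA //; apply: vcomp_heq; last exact: castc_heq.
    apply: heq_trans (castc_heq _ _ _) _; rewrite wr_vcomp //; apply: vcomp_heq.
    + exact: heq_sym (wrA_heq _ _).
    + exact: wr_comp.
  - rewrite -vcompA //; apply: vcomp_heq; first exact: heq_sym (castc_heq _ _ _).
    apply: heq_trans (heq_sym (wr_comp HK _ _ _)) _; apply: wr_heq.
    exact: heq_trans (wr_id1 HK _) (heq_sym (castc_heq _ _ _)).
have T_bij : bijective T := castc_bij _ _.
apply: (inj_comp_bij G_inj).
by apply: (eq_bij (bij_comp (Hpw B (id1 B) P p q lam Hc k) T_bij)) => kappa; rewrite /= GM.
Qed.

Lemma pointwise_left_ext_left_ext (HFC : finitely_complete K) {A B C} {f : hom K A C}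
  {g : hom K A B} {h : hom K B C} {phi : cell f (comp1 h g)} :
  is_pointwise_left_ext f g h phi -> is_left_ext f g h phi.
Proof.
case: HFC => _ [_ commas].
have [P [p [q [lam Hc]]]] := commas _ _ _ g (id1 B).
exact: left_ext_of_pointwise_at_id Hc.
Qed.

Lemma wr_paste {A B C P X} {y : hom K A P} {f : hom K A C} {b : hom K C P}
  {h : hom K B C} {g : hom K A B} (phi : cell f (comp1 h g)) (psi : cell y (comp1 b f))
  (p : hom K X A) :
  wr (vcomp (wl b phi) psi) p ~= vcomp (wl b (wrA phi p)) (wrA psi p).
Proof.
rewrite wr_vcomp //; apply: vcomp_heq; first exact: heq_sym (wrA_heq _ _).
exact: heq_trans (heq_sym (wl_wr HK _ _ _)) (wl_heq b (heq_sym (wrA_heq _ _))).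
Qed.

Lemma abs_left_lifting_pasting {A B C P} {y : hom K A P} {f : hom K A C} {b : hom K C P}
  {psi : cell y (comp1 b f)} {h : hom K B C} {g : hom K A B} {phi : cell f (comp1 h g)} :
  is_abs_left_lifting y b f psi ->
  (is_abs_left_lifting f h g phi <->
   is_abs_left_lifting y (comp1 b h) g
     (castc (@cell K A P) erefl (comp1A b h g) (vcomp (wl b phi) psi))).
Proof.
move=> Hpsi.
pose Phi := castc (@cell K A P) erefl (comp1A b h g) (vcomp (wl b phi) psi).
have key D (j : hom K D A) (k : hom K D B) :
    bijective (fun kappa : cell (comp1 g j) k => vcomp (wl h kappa) (wrA phi j)) <->
    bijective (fun kappa : cell (comp1 g j) k => vcomp (wl (comp1 b h) kappa) (wrA Phi j)).
  apply: (bij_square_heq _ _ id (fun beta => vcomp (wl b beta) (wrA psi j)) id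
    erefl (comp1A b h k) bij_id (Hpsi D j (comp1 h k)) bij_id) => kappa.
  rewrite wl_vcomp // -vcompA //; apply: vcomp_heq (wl_comp HK _ _ _).
  apply: heq_sym; apply: heq_trans (wrA_heq _ _) _.
  exact: heq_trans (wr_heq j (castc_heq _ _ _)) (wr_paste _ _ _).
by split=> H D j k; [apply/(key D j k) | apply/(key D j k)]; apply: H.
Qed.

Lemma left_ext_comparison_iso {A B C} {y : hom K A C} {g : hom K A B} {b b' : hom K B C}
  {omega : cell y (comp1 b g)} {sigma : cell b b'} :
  is_left_ext y g b omega -> is_left_ext y g b' (vcomp (wr sigma g) omega) -> is_iso sigma.
Proof.
move=> Hom Hom'.
have [tau tau_sigma] : exists tau : cell b' b,
    vcomp (wr tau g) (vcomp (wr sigma g) omega) = omega.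
  by case: (Hom' b) => inv _ invK; exists (inv omega); apply: invK.
exists tau; split; [apply: (bij_inj (Hom b)) | apply: (bij_inj (Hom' b'))] => /=.
all: by rewrite wr_vcomp // -vcompA // tau_sigma wr_id2 // vcomp_id2l.
Qed.

Lemma abs_left_lifting_vcomp_iso {A B C} {y : hom K A C} {g : hom K A B} {b b' : hom K B C}
  {omega : cell y (comp1 b g)} {sigma : cell b b'} :
  is_iso sigma -> is_abs_left_lifting y b g omega ->
  is_abs_left_lifting y b' g (vcomp (wr sigma g) omega).
Proof.
move=> [tau [tau_sigma sigma_tau]] Hom D j k.
have sigma_bij : bijective (@vcomp K D C (comp1 y j) (comp1 b k) (comp1 b' k) (wr sigma k)).
  by exists (vcomp (wr tau k)) => x;
    rewrite vcompA // -wr_vcomp // ?tau_sigma ?sigma_tau wr_id2 // vcomp_id2l.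
apply: (bij_square_heq _ _ id id _ erefl erefl bij_id bij_id sigma_bij _).2 (Hom D j k).
move=> kappa /=; rewrite vcompA // -whisker_exchange // -vcompA //.
apply: vcomp_heq (heq_refl _); apply: heq_trans (wrA_heq _ _) _.
by rewrite wr_vcomp //; apply: vcomp_heq (heq_sym (wrA_heq _ _)) (wr_comp HK _ _ _).
Qed.

End LiftingsAndExtensions.

Section Mates.
Context {K : TwoCatData} (HK : is_2cat K).
Context {A B C P : ob K} {y : hom K A P} {f : hom K A C} {g : hom K A B} {h : hom K B C}
  {b : hom K C P} {b' : hom K B P} {psi : cell y (comp1 b f)} {omega : cell y (comp1 b' g)}
  {phi : cell f (comp1 h g)} {phi' : cell b' (comp1 b h)}.
Hypothesis mate_eq : castc (@cell K A P) erefl (comp1A b h g) (vcomp (wl b phi) psi)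
                     = vcomp (wr phi' g) omega.

Lemma mate_heq : vcomp (wl b phi) psi ~= vcomp (wr phi' g) omega.
Proof.
apply: heq_trans (heq_sym (castc_heq erefl (comp1A b h g) _)) _.
by rewrite mate_eq; apply: heq_refl.
Qed.

Lemma mate_heq_wr {X} (p : hom K X A) :
  vcomp (wl b (wrA phi p)) (wrA psi p) ~= vcomp (wr phi' (comp1 g p)) (wrA omega p).
Proof.
apply: heq_trans (heq_sym (wr_paste HK phi psi p)) _.
apply: heq_trans (wr_heq p mate_heq) _.
by rewrite wr_vcomp //; apply: vcomp_heq (heq_sym (wrA_heq _ _)) (wr_comp HK _ _ _).
Qed.

Lemma left_ext_iff_left_lifting_mate :
  is_left_lifting y b f psi -> is_left_ext y g b' omega ->
  (is_left_ext f g h phi <-> is_left_lifting b' b h phi').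
Proof.
move=> Hpsi Hom.
have key k : bijective (fun kappa : cell h k => vcomp (wr kappa g) phi) <->
             bijective (fun kappa : cell h k => vcomp (wl b kappa) phi').
  apply: (bij_square_heq _ _ id (fun beta => vcomp (wl b beta) psi)
    (fun theta => vcomp (wr theta g) omega)
    erefl (comp1A b k g) bij_id (Hpsi (comp1 k g)) (Hom (comp1 b k))) => kappa.
  rewrite /= wl_vcomp // wr_vcomp // -!vcompA //.
  exact: (vcomp_heq mate_heq (wl_wr HK _ _ _)).
by split=> H k; [apply/(key k) | apply/(key k)]; apply: H.
Qed.

Lemma left_ext_at_comma_iff_left_lifting {X Q} {c : hom K X B} {p : hom K Q A}
  {q : hom K Q X} {lam : cell (comp1 g p) (comp1 c q)} :
  is_comma g c p q lam ->
  is_abs_left_lifting y b f psi -> is_pointwise_left_ext y g b' omega ->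
  (is_left_ext (comp1 f p) q (comp1 h c)
     (castc (@cell K Q C) erefl (comp1A h c q) (vcomp (wl h lam) (wrA phi p)))
   <-> is_left_lifting (comp1 b' c) b (comp1 h c) (wrA phi' c)).
Proof.
move=> Hc Hpsi Hom.
set Lam := castc (@cell K Q C) erefl (comp1A h c q) (vcomp (wl h lam) (wrA phi p)).
pose Om := castc (@cell K Q P) erefl (comp1A b' c q) (vcomp (wl b' lam) (wrA omega p)).
have pasting : vcomp (wl b Lam) (wrA psi p) ~= vcomp (wr (wrA phi' c) q) Om.
  apply: heq_trans (vcomp_heq (heq_refl _) (wl_heq b (castc_heq _ _ _))) _.
  rewrite wl_vcomp // -vcompA //.
  apply: (heq_trans (b := vcomp (wl (comp1 b h) lam) (vcomp (wr phi' (comp1 g p)) (wrA omega p)))).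
    exact: (vcomp_heq (mate_heq_wr p) (wl_comp HK _ _ _)).
  rewrite vcompA // whisker_exchange // -vcompA //.
  apply: vcomp_heq; first exact: heq_sym (castc_heq _ _ _).
  exact: heq_sym (heq_trans (wr_heq q (wrA_heq _ _)) (wr_comp HK _ _ _)).
have key k : bijective (fun kappa : cell (comp1 h c) k => vcomp (wr kappa q) Lam) <->
             bijective (fun kappa : cell (comp1 h c) k => vcomp (wl b kappa) (wrA phi' c)).
  apply: (bij_square_heq _ _ id (fun beta => vcomp (wl b beta) (wrA psi p))
    (fun theta => vcomp (wr theta q) Om) erefl (comp1A b k q) bij_id
    (Hpsi Q p (comp1 k q)) (Hom X c Q p q lam Hc (comp1 b k))) => kappa.
  rewrite /= wl_vcomp // wr_vcomp // -!vcompA //.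
  exact: (vcomp_heq pasting (wl_wr HK _ _ _)).
by split=> H k; [apply/(key k) | apply/(key k)]; apply: H.
Qed.

Lemma pointwise_left_ext_iff_abs_left_lifting_mate (HFC : finitely_complete K) :
  is_abs_left_lifting y b f psi -> is_pointwise_left_ext y g b' omega ->
  (is_pointwise_left_ext f g h phi <-> is_abs_left_lifting b' b h phi').
Proof.
move=> Hpsi Hom; split=> H X c.
- case: HFC => _ [_ commas]; have [Q [p [q [lam Hc]]]] := commas _ _ _ g c.
  exact: (left_ext_at_comma_iff_left_lifting Hc Hpsi Hom).1 (H X c Q p q lam Hc).
- move=> Q p q lam Hc.
  exact: (left_ext_at_comma_iff_left_lifting Hc Hpsi Hom).2 (H X c).
Qed.

End Mates.

Theorem lemma3p10 (K : TwoCatData) (HK : is_2cat K) (HFC : finitely_complete K)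
  (Y : YonedaData K) (HY : is_good_yoneda Y)
  (A B C : ob K) (hA : adm Y (id1 A))
  (f : hom K A C) (hf : adm Y f) (g : hom K A B) (hg : adm Y g)
  (h : hom K B C) (phi : cell f (comp1 h g))
  (phi' : cell (Bf1 Y g hA hg) (comp1 (Bf1 Y f hA hf) h))
  (Hphi' : castc (@cell K A (Pre Y A)) erefl (comp1A (Bf1 Y f hA hf) h g)
             (vcomp (wl (Bf1 Y f hA hf) phi) (chi Y f hA hf))
           = vcomp (wr phi' g) (chi Y g hA hg)) :
  (is_left_ext f g h phi <-> is_left_lifting (Bf1 Y g hA hg) (Bf1 Y f hA hf) h phi') /\
  (is_pointwise_left_ext f g h phi <->
     is_abs_left_lifting (Bf1 Y g hA hg) (Bf1 Y f hA hf) h phi') /\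
  (is_abs_left_lifting f h g phi <-> is_iso phi').
Proof.
case: HY => _ [_ [chi_abs yoneda_ext]].
have chif_abs := chi_abs _ _ f hA hf; have chig_abs := chi_abs _ _ g hA hg.
have chig_pw := yoneda_ext _ _ g hA hg _ _ chig_abs.
have chig_ext := pointwise_left_ext_left_ext HK HFC chig_pw.
split; [|split].
- exact: (left_ext_iff_left_lifting_mate HK Hphi'
    (abs_left_lifting_left_lifting HK chif_abs) chig_ext).
- exact: (pointwise_left_ext_iff_abs_left_lifting_mate HK Hphi' HFC chif_abs chig_pw).
- apply: (iff_trans (abs_left_lifting_pasting HK chif_abs)); rewrite Hphi'.
  split=> [Habs | iso].
  + apply: (left_ext_comparison_iso HK chig_ext).
    exact: (pointwise_left_ext_left_ext HK HFC (yoneda_ext _ _ g hA hg _ _ Habs)).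
  + exact: (abs_left_lifting_vcomp_iso HK iso chig_abs).
Qed.
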